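(* Let $X$ be a real Hilbert space, let $m\ge2$ be an integer, $I=\{1,\dots,m\}$, let $(R_i)_{i\in I}$ be operators $X\to X$, let $r\in I$, let $(\alpha_i)_{i\in I}$ be reals with $\alpha_i\in\left]0,1\right[$ for $i\in I\setminus\{r\}$ and $\alpha_r>0$, let $\delta_i\in\mathbb{R}\setminus\{0\}$, and suppose that for each $i\in I$, $\tfrac1{\delta_i}R_i$ is $\alpha_i$-conically nonexpansive. Set $R=R_m\cdots R_1$ and $$\bar\alpha=\frac{\sum_{i\in I,\,i\neq r}\frac{\alpha_i}{1-\alpha_i}}{1+\sum_{i\in I,\,i\neq r}\frac{\alpha_i}{1-\alpha_i}}.$$ Suppose $\alpha_r\bar\alpha<1$, and set $$\alpha=\begin{cases}\dfrac{\sum_{i=1}^m\frac{\alpha_i}{1-\alpha_i}}{1+\sum_{i=1}^m\frac{\alpha_i}{1-\alpha_i}},&\alpha_r\neq1;\\ 1,&\alpha_r=1.\end{cases}$$ Then there exists a nonexpansive $N\colon X\to X$ such that $R=\delta_m\cdots\delta_1\big((1-\alpha)\mathrm{Id}+\alpha N\big)$.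
   Context: For $\alpha>0$, an operator $T\colon X\to X$ is $\alpha$-conically nonexpansive if there exists a nonexpansive ($1$-Lipschitz) $N\colon X\to X$ with $T=(1-\alpha)\mathrm{Id}+\alpha N$. *)

From Stdlib Require Import Reals Lra.
Open Scope R_scope.

Record Hilbert := {
  hcar :> Type;
  hzero : hcar;
  hadd : hcar -> hcar -> hcar;
  hopp : hcar -> hcar;
  hscal : R -> hcar -> hcar;
  hinner : hcar -> hcar -> R;
  hadd_assoc : forall x y z, hadd x (hadd y z) = hadd (hadd x y) z;
  hadd_comm : forall x y, hadd x y = hadd y x;
  hadd_zero : forall x, hadd x hzero = x;
  hadd_opp : forall x, hadd x (hopp x) = hzero;
  hscal_assoc : forall a b x, hscal a (hscal b x) = hscal (a * b) x;
  hscal_one : forall x, hscal 1 x = x;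
  hscal_distr_l : forall a x y, hscal a (hadd x y) = hadd (hscal a x) (hscal a y);
  hscal_distr_r : forall a b x, hscal (a + b) x = hadd (hscal a x) (hscal b x);
  hinner_sym : forall x y, hinner x y = hinner y x;
  hinner_lin : forall a x y z,
    hinner (hadd (hscal a x) y) z = a * hinner x z + hinner y z;
  hinner_pos : forall x, 0 <= hinner x x;
  hinner_def : forall x, hinner x x = 0 -> x = hzero;
  hcomplete : forall u : nat -> hcar,
    (forall eps, eps > 0 -> exists N, forall n p, (n >= N)%nat -> (p >= N)%nat ->
       sqrt (hinner (hadd (u n) (hopp (u p))) (hadd (u n) (hopp (u p)))) < eps) ->
    exists l, forall eps, eps > 0 -> exists N, forall n, (n >= N)%nat ->
       sqrt (hinner (hadd (u n) (hopp l)) (hadd (u n) (hopp l))) < eps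
}.

Definition hsub {X : Hilbert} (x y : X) : X := hadd X x (hopp X y).
Definition hnorm {X : Hilbert} (x : X) : R := sqrt (hinner X x x).

Definition nonexpansive {X : Hilbert} (N : X -> X) : Prop :=
  forall x y, hnorm (hsub (N x) (N y)) <= hnorm (hsub x y).

Definition conically_nonexpansive {X : Hilbert} (alpha : R) (T : X -> X) : Prop :=
  exists N : X -> X, nonexpansive N /\
    forall x, T x = hadd X (hscal X (1 - alpha) x) (hscal X alpha (N x)).

Fixpoint comp_ops {X : Type} (Rs : nat -> X -> X) (n : nat) : X -> X :=
  match n with
  | O => fun x => x
  | S k => fun x => Rs (S k) (comp_ops Rs k x)
  end.

Fixpoint sum_1n (f : nat -> R) (n : nat) : R :=
  match n with O => 0 | S k => sum_1n f k + f (S k) end.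
Fixpoint prod_1n (f : nat -> R) (n : nat) : R :=
  match n with O => 1 | S k => prod_1n f k * f (S k) end.

(** The conic nonexpansiveness of [T] with parameter [a] is equivalent to the
    quadratic inequality
      [(1 - a) |(x - y) - (Tx - Ty)|^2 <= a (|x - y|^2 - |Tx - Ty|^2)],
    and for pairs of coefficients [(A, B)] with [B > 0] this inequality is stable
    under composition: [(A1, B1)] followed by [(A2, B2)] gives
    [(A1 A2, A1 B2 + A2 B1)].  Normalising each [alpha_i]-conic factor with
    [i <> r] to [(1, kappa_i)], [kappa_i = alpha_i / (1 - alpha_i)], the ratios
    [B / A] simply add up, while the factor [r] enters as [(1 - alpha_r, alpha_r)]
    so that [alpha_r = 1] needs no division.  The hypothesis [alpha_r alpha_bar < 1]
    is exactly what keeps every intermediate [B] positive.  Dividing out the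
    scalars [delta_i] amounts to conjugating each factor by a dilation, which
    preserves the inequality. *)

From Stdlib Require Import Reals Lra Lia Psatz.
Open Scope R_scope.

Lemma mul_ratio_lt_1 a K : 0 <= K -> a * (K / (1 + K)) < 1 -> a * K < 1 + K.
Proof.
  intros hK h.
  replace (a * K) with (a * (K / (1 + K)) * (1 + K)) by (field; lra).
  nra.
Qed.

Lemma sum_1n_nonneg (f : nat -> R) n :
  (forall i, (1 <= i <= n)%nat -> 0 <= f i) -> 0 <= sum_1n f n.
Proof.
  induction n as [|k IH]; intros hf; cbn [sum_1n]; [lra |].
  assert (0 <= sum_1n f k) by (apply IH; intros; apply hf; lia).
  assert (0 <= f (S k)) by (apply hf; lia).
  lra.
Qed.

Lemma sum_1n_pos (f : nat -> R) n :
  (forall i, (1 <= i <= n)%nat -> 0 < f i) -> (1 <= n)%nat -> 0 < sum_1n f n.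
Proof.
  intros hf hn. destruct n as [|k]; [lia |]. cbn [sum_1n].
  assert (0 <= sum_1n f k) by (apply sum_1n_nonneg; intros; apply Rlt_le, hf; lia).
  assert (0 < f (S k)) by (apply hf; lia).
  lra.
Qed.

Lemma sum_1n_le (f : nat -> R) k n :
  (forall i, (1 <= i <= n)%nat -> 0 <= f i) -> (k <= n)%nat -> sum_1n f k <= sum_1n f n.
Proof.
  induction n as [|n IH]; intros hf hk.
  - replace k with 0%nat by lia. lra.
  - destruct (Nat.eq_dec k (S n)) as [-> | hne]; [lra |]. cbn [sum_1n].
    assert (sum_1n f k <= sum_1n f n) by (apply IH; [intros; apply hf |]; lia).
    assert (0 <= f (S n)) by (apply hf; lia).
    lra.
Qed.

Lemma sum_1n_split_at (f : nat -> R) r n : (1 <= r)%nat ->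
  sum_1n f n = sum_1n (fun i => if Nat.eqb i r then 0 else f i) n
               + (if Nat.leb r n then f r else 0).
Proof.
  intros hr. induction n as [|k IH]; cbn [sum_1n].
  - replace (Nat.leb r 0) with false by (symmetry; apply Nat.leb_gt; lia). ring.
  - rewrite IH. destruct (Nat.eqb_spec (S k) r) as [<- | hne].
    + rewrite Nat.leb_refl.
      replace (Nat.leb (S k) k) with false by (symmetry; apply Nat.leb_gt; lia). ring.
    + destruct (Nat.leb_spec r k), (Nat.leb_spec r (S k)); try lia; ring.
Qed.

Lemma prod_1n_neq0 (d : nat -> R) n :
  (forall i, (1 <= i <= n)%nat -> d i <> 0) -> prod_1n d n <> 0.
Proof.
  induction n as [|k IH]; intros hd; cbn [prod_1n]; [lra |].
  apply Rmult_integral_contrapositive.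
  split; [apply IH; intros; apply hd; lia | apply hd; lia].
Qed.

Section InnerProduct.
Variable X : Hilbert.

Lemma hinner_zerol z : hinner X (hzero X) z = 0.
Proof.
  pose proof (hinner_lin X 1 (hzero X) (hzero X) z) as H.
  rewrite hscal_one, hadd_zero in H. lra.
Qed.

Lemma hinner_addl x y z : hinner X (hadd X x y) z = hinner X x z + hinner X y z.
Proof. pose proof (hinner_lin X 1 x y z) as H. rewrite hscal_one in H. lra. Qed.

Lemma hinner_scall a x z : hinner X (hscal X a x) z = a * hinner X x z.
Proof.
  pose proof (hinner_lin X a x (hzero X) z) as H.
  rewrite hadd_zero, hinner_zerol in H. lra.
Qed.

Lemma hinner_oppl x z : hinner X (hopp X x) z = - hinner X x z.
Proof.
  pose proof (hinner_addl x (hopp X x) z) as H.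
  rewrite hadd_opp, hinner_zerol in H. lra.
Qed.

Lemma hinner_addr x y z : hinner X z (hadd X x y) = hinner X z x + hinner X z y.
Proof. rewrite !(hinner_sym X z). apply hinner_addl. Qed.

Lemma hinner_scalr a x z : hinner X z (hscal X a x) = a * hinner X z x.
Proof. rewrite !(hinner_sym X z). apply hinner_scall. Qed.

Lemma hinner_oppr x z : hinner X z (hopp X x) = - hinner X z x.
Proof. rewrite !(hinner_sym X z). apply hinner_oppl. Qed.

End InnerProduct.

Definition hnorm2 {X : Hilbert} (z : X) : R := hinner X z z.

(* Reduces an identity between inner products of linear combinations to a ring
   identity in the inner products of the atoms. *)
Ltac hinner_expand :=
  unfold hsub, hnorm2 in *;
  repeat rewrite ?hinner_addl, ?hinner_addr, ?hinner_scall, ?hinner_scalr,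
    ?hinner_oppl, ?hinner_oppr;
  repeat match goal with |- context [hinner ?X ?a ?b] =>
    match goal with |- context [hinner X b a] =>
      tryif constr_eq a b then fail else rewrite (hinner_sym X b a) end end.

Definition conic_ineq {X : Hilbert} (A B : R) (T : X -> X) : Prop :=
  forall x y, A * hnorm2 (hsub (hsub x y) (hsub (T x) (T y)))
              <= B * (hnorm2 (hsub x y) - hnorm2 (hsub (T x) (T y))).

Definition dilate_conj {X : Hilbert} (D : R) (T : X -> X) : X -> X :=
  fun z => hscal X (/ D) (T (hscal X D z)).

Section ConicInequality.
Variable X : Hilbert.

Lemma conic_ineq_ext A B (T T' : X -> X) :
  (forall z, T z = T' z) -> conic_ineq A B T -> conic_ineq A B T'.
Proof. intros E H x y. rewrite <- !E. apply H. Qed.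

Lemma conic_ineq_scale c A B (T : X -> X) :
  0 < c -> conic_ineq A B T -> conic_ineq (c * A) (c * B) T.
Proof.
  intros hc H x y. rewrite !Rmult_assoc.
  apply Rmult_le_compat_l; [lra | apply H].
Qed.

Lemma conically_nonexpansive_conic_ineq a (T : X -> X) :
  conically_nonexpansive a T -> conic_ineq (1 - a) a T.
Proof.
  intros [N [HN HT]] x y. rewrite !HT.
  assert (HNxy : hnorm2 (hsub (N x) (N y)) <= hnorm2 (hsub x y)).
  { apply sqrt_le_0; try apply hinner_pos. apply HN. }
  set (nx := N x) in *. set (ny := N y) in *. clearbody nx ny.
  assert (E : a * (hnorm2 (hsub x y)
       - hnorm2 (hsub (hadd X (hscal X (1 - a) x) (hscal X a nx))
                      (hadd X (hscal X (1 - a) y) (hscal X a ny))))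
     - (1 - a) * hnorm2 (hsub (hsub x y)
         (hsub (hadd X (hscal X (1 - a) x) (hscal X a nx))
               (hadd X (hscal X (1 - a) y) (hscal X a ny))))
     = a * a * (hnorm2 (hsub x y) - hnorm2 (hsub nx ny)))
    by (hinner_expand; ring).
  assert (0 <= a * a * (hnorm2 (hsub x y) - hnorm2 (hsub nx ny))).
  { apply Rmult_le_pos; nra. }
  lra.
Qed.

Lemma conic_ineq_conically_nonexpansive A B (T : X -> X) :
  0 < B -> 0 < A + B -> conic_ineq A B T -> conically_nonexpansive (B / (A + B)) T.
Proof.
  intros hB hAB H. set (a := B / (A + B)).
  assert (ha : 0 < a) by (unfold a; apply Rdiv_lt_0_compat; lra).
  exists (fun x => hscal X (/ a) (hsub (T x) (hscal X (1 - a) x))). split.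
  - intros x y. apply sqrt_le_1_alt.
    pose proof (H x y) as Hxy.
    set (tx := T x) in *. set (ty := T y) in *. clearbody tx ty.
    (* [N = (T - (1 - a) Id) / a] turns the defect of nonexpansiveness of [N]
       into a positive multiple of the defect in the conic inequality. *)
    assert (E : hnorm2 (hsub x y)
      - hnorm2 (hsub (hscal X (/ a) (hsub tx (hscal X (1 - a) x)))
                     (hscal X (/ a) (hsub ty (hscal X (1 - a) y))))
      = (A + B) / (B * B) * (B * (hnorm2 (hsub x y) - hnorm2 (hsub tx ty))
                             - A * hnorm2 (hsub (hsub x y) (hsub tx ty)))).
    { unfold a. hinner_expand. field. lra. }
    assert (0 <= (A + B) / (B * B)) by (apply Rlt_le, Rdiv_lt_0_compat; nra).
    unfold hnorm2 in *. nra.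
  - intros x. unfold hsub.
    rewrite hscal_assoc, Rinv_r, hscal_one by lra.
    now rewrite (hadd_comm X (T x)), hadd_assoc, hadd_opp, hadd_comm, hadd_zero.
Qed.

(* The key quadratic estimate: [(P + Q)(P |u|^2 + Q |w|^2) - P Q |u + w|^2
   = |P u - Q w|^2 >= 0] with [P = A1 B2], [Q = A2 B1]. *)
Lemma comp_coef_ineq A1 B1 A2 B2 nu nw uw du dw :
  0 < B1 -> 0 < B2 -> 0 < A1 * B2 + A2 * B1 ->
  A1 * nu <= B1 * du -> A2 * nw <= B2 * dw ->
  0 <= (A1 * B2) ^ 2 * nu - 2 * (A1 * B2) * (A2 * B1) * uw + (A2 * B1) ^ 2 * nw ->
  A1 * A2 * (nu + 2 * uw + nw) <= (A1 * B2 + A2 * B1) * (du + dw).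
Proof.
  intros hB1 hB2 hPQ h1 h2 hsq.
  set (P := A1 * B2) in *. set (Q := A2 * B1) in *.
  assert (hmix : P * nu + Q * nw <= B1 * B2 * (du + dw)).
  { assert (0 <= B2 * (B1 * du - A1 * nu)) by (apply Rmult_le_pos; lra).
    assert (0 <= B1 * (B2 * dw - A2 * nw)) by (apply Rmult_le_pos; lra).
    unfold P, Q. nra. }
  assert (hPQmix : P * Q * (nu + 2 * uw + nw) <= (P + Q) * (P * nu + Q * nw)) by nra.
  apply (Rmult_le_reg_l (B1 * B2)); [nra |].
  replace (B1 * B2 * (A1 * A2 * (nu + 2 * uw + nw)))
    with (P * Q * (nu + 2 * uw + nw)) by (unfold P, Q; ring).
  nra.
Qed.

Lemma conic_ineq_comp A1 B1 A2 B2 (T1 T2 : X -> X) :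
  0 < B1 -> 0 < B2 -> 0 < A1 * B2 + A2 * B1 ->
  conic_ineq A1 B1 T1 -> conic_ineq A2 B2 T2 ->
  conic_ineq (A1 * A2) (A1 * B2 + A2 * B1) (fun z => T2 (T1 z)).
Proof.
  intros hB1 hB2 hPQ c1 c2 x y.
  pose proof (c1 x y) as H1. pose proof (c2 (T1 x) (T1 y)) as H2.
  set (u := hsub x y) in *. set (w := hsub (T1 x) (T1 y)) in *.
  set (v := hsub (T2 (T1 x)) (T2 (T1 y))) in *.
  pose proof (hinner_pos X (hsub (hscal X (A1 * B2) (hsub u w))
                                 (hscal X (A2 * B1) (hsub w v)))) as Hsq.
  clearbody u w v.
  assert (E1 : hnorm2 (hsub u v)
     = hnorm2 (hsub u w) + 2 * hinner X (hsub u w) (hsub w v) + hnorm2 (hsub w v))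
    by (hinner_expand; ring).
  assert (E2 : hinner X (hsub (hscal X (A1 * B2) (hsub u w)) (hscal X (A2 * B1) (hsub w v)))
                        (hsub (hscal X (A1 * B2) (hsub u w)) (hscal X (A2 * B1) (hsub w v)))
     = (A1 * B2) ^ 2 * hnorm2 (hsub u w)
       - 2 * (A1 * B2) * (A2 * B1) * hinner X (hsub u w) (hsub w v)
       + (A2 * B1) ^ 2 * hnorm2 (hsub w v))
    by (hinner_expand; ring).
  rewrite E2 in Hsq. rewrite E1.
  replace (hnorm2 u - hnorm2 v) with ((hnorm2 u - hnorm2 w) + (hnorm2 w - hnorm2 v)) by ring.
  apply comp_coef_ineq; assumption.
Qed.

Lemma conic_ineq_dilate_conj A B D (T : X -> X) :
  D <> 0 -> conic_ineq A B T -> conic_ineq A B (dilate_conj D T).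
Proof.
  intros hD H x y. unfold dilate_conj.
  pose proof (H (hscal X D x) (hscal X D y)) as HD.
  set (p := T (hscal X D x)) in *. set (q := T (hscal X D y)) in *. clearbody p q.
  assert (E1 : hnorm2 (hsub (hsub x y) (hsub (hscal X (/ D) p) (hscal X (/ D) q)))
     = / (D * D) * hnorm2 (hsub (hsub (hscal X D x) (hscal X D y)) (hsub p q)))
    by (hinner_expand; field; auto).
  assert (E2 : hnorm2 (hsub x y) - hnorm2 (hsub (hscal X (/ D) p) (hscal X (/ D) q))
     = / (D * D) * (hnorm2 (hsub (hscal X D x) (hscal X D y)) - hnorm2 (hsub p q)))
    by (hinner_expand; field; auto).
  rewrite E1, E2.
  assert (0 < / (D * D)) by (apply Rinv_0_lt_compat; nra).
  nra.
Qed.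

Lemma conic_ineq_comp_ops (Ts : nat -> X -> X) (a b A B : nat -> R) n :
  A 0%nat = 1 -> B 0%nat = 0 ->
  (forall k, (k < n)%nat ->
     A (S k) = A k * a (S k) /\ B (S k) = A k * b (S k) + a (S k) * B k) ->
  (forall i, (1 <= i <= n)%nat -> 0 < b i) ->
  (forall k, (1 <= k <= n)%nat -> 0 < B k) ->
  (forall i, (1 <= i <= n)%nat -> conic_ineq (a i) (b i) (Ts i)) ->
  (1 <= n)%nat -> conic_ineq (A n) (B n) (comp_ops Ts n).
Proof.
  intros hA0 hB0 hrec hb hB hT hn.
  enough (H : forall k, (1 <= k <= n)%nat -> conic_ineq (A k) (B k) (comp_ops Ts k))
    by (apply H; lia).
  induction k as [|k IH]; intros hk; [lia |].
  destruct (hrec k ltac:(lia)) as [EA EB].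
  rewrite EA, EB.
  destruct k as [|k].
  - rewrite hA0, hB0, Rmult_1_l, Rmult_1_l, Rmult_0_r, Rplus_0_r.
    apply hT; lia.
  - apply (conic_ineq_comp _ _ _ _ (comp_ops Ts (S k)) (Ts (S (S k)))).
    + apply hB; lia.
    + apply hb; lia.
    + rewrite <- EB. apply hB; lia.
    + apply IH; lia.
    + apply hT; lia.
Qed.

Lemma comp_ops_rescale (Rs : nat -> X -> X) (d : nat -> R) n :
  (forall i, (1 <= i <= n)%nat -> d i <> 0) ->
  forall x, comp_ops Rs n x =
    hscal X (prod_1n d n)
      (comp_ops (fun i => dilate_conj (prod_1n d (pred i))
                            (fun z => hscal X (/ d i) (Rs i z))) n x).
Proof.
  intros hd. induction n as [|k IH]; intros x; cbn [comp_ops prod_1n pred].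
  - now rewrite hscal_one.
  - assert (hP : prod_1n d k <> 0) by (apply prod_1n_neq0; intros; apply hd; lia).
    assert (hdk : d (S k) <> 0) by (apply hd; lia).
    unfold dilate_conj. rewrite <- IH by (intros; apply hd; lia).
    rewrite !hscal_assoc.
    replace (prod_1n d k * d (S k) * / prod_1n d k * / d (S k)) with 1 by (field; auto).
    now rewrite hscal_one.
Qed.

End ConicInequality.

Definition kappa (a : R) : R := a / (1 - a).

Lemma kappa_pos a : 0 < a < 1 -> 0 < kappa a.
Proof. intros ha. unfold kappa. apply Rdiv_lt_0_compat; lra. Qed.

Section Coefficients.
Variables (alphas : nat -> R) (r m : nat).

Definition kappa_off_r (i : nat) : R := if Nat.eqb i r then 0 else kappa (alphas i).

Definition step_A (i : nat) : R := if Nat.eqb i r then 1 - alphas r else 1.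
Definition step_B (i : nat) : R := if Nat.eqb i r then alphas r else kappa (alphas i).
Definition prefix_A (k : nat) : R := if Nat.leb r k then 1 - alphas r else 1.
Definition prefix_B (k : nat) : R :=
  if Nat.leb r k then alphas r + (1 - alphas r) * sum_1n kappa_off_r k
  else sum_1n kappa_off_r k.

Lemma prefix_succ k :
  prefix_A (S k) = prefix_A k * step_A (S k) /\
  prefix_B (S k) = prefix_A k * step_B (S k) + step_A (S k) * prefix_B k.
Proof.
  unfold prefix_A, prefix_B, step_A, step_B. cbn [sum_1n].
  change (kappa_off_r (S k)) with (if Nat.eqb (S k) r then 0 else kappa (alphas (S k))).
  destruct (Nat.eqb_spec (S k) r) as [<- | hne].
  - rewrite Nat.leb_refl.
    replace (Nat.leb (S k) k) with false by (symmetry; apply Nat.leb_gt; lia).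
    split; ring.
  - destruct (Nat.leb_spec r k), (Nat.leb_spec r (S k)); try lia; split; ring.
Qed.

Hypothesis hr : (1 <= r <= m)%nat.
Hypothesis halpha : forall i, (1 <= i <= m)%nat -> i <> r -> 0 < alphas i < 1.
Hypothesis halpha_r : 0 < alphas r.

Lemma kappa_off_r_nonneg i : (1 <= i <= m)%nat -> 0 <= kappa_off_r i.
Proof.
  intros hi. unfold kappa_off_r. destruct (Nat.eqb_spec i r); [lra |].
  apply Rlt_le, kappa_pos, halpha; assumption.
Qed.

Lemma step_B_pos i : (1 <= i <= m)%nat -> 0 < step_B i.
Proof.
  intros hi. unfold step_B. destruct (Nat.eqb_spec i r) as [-> | hne]; [lra |].
  apply kappa_pos, halpha; assumption.
Qed.

Lemma conic_ineq_step (X : Hilbert) (T : X -> X) i : (1 <= i <= m)%nat ->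
  conically_nonexpansive (alphas i) T -> conic_ineq (step_A i) (step_B i) T.
Proof.
  intros hi hT. apply conically_nonexpansive_conic_ineq in hT.
  unfold step_A, step_B. destruct (Nat.eqb_spec i r) as [-> | hne]; [exact hT |].
  specialize (halpha i hi hne).
  replace 1 with (/ (1 - alphas i) * (1 - alphas i)) by (field; lra).
  replace (kappa (alphas i)) with (/ (1 - alphas i) * alphas i)
    by (unfold kappa; field; lra).
  apply conic_ineq_scale; [apply Rinv_0_lt_compat; lra | exact hT].
Qed.

Lemma prefix_A_0 : prefix_A 0 = 1.
Proof.
  unfold prefix_A. now replace (Nat.leb r 0) with false by (symmetry; apply Nat.leb_gt; lia).
Qed.

Lemma prefix_B_0 : prefix_B 0 = 0.
Proof.
  unfold prefix_B. now replace (Nat.leb r 0) with false by (symmetry; apply Nat.leb_gt; lia).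
Qed.


Hypothesis hcond : alphas r * sum_1n kappa_off_r m < 1 + sum_1n kappa_off_r m.

Lemma prefix_B_pos k : (1 <= k <= m)%nat -> 0 < prefix_B k.
Proof.
  intros hk. unfold prefix_B. destruct (Nat.leb_spec r k).
  - assert (h0 : 0 <= sum_1n kappa_off_r k)
      by (apply sum_1n_nonneg; intros; apply kappa_off_r_nonneg; lia).
    assert (hle : sum_1n kappa_off_r k <= sum_1n kappa_off_r m)
      by (apply sum_1n_le; [intros; apply kappa_off_r_nonneg |]; lia).
    destruct (Rle_lt_dec (alphas r) 1); nra.
  - apply sum_1n_pos; [| lia]. intros i hi.
    unfold kappa_off_r. replace (Nat.eqb i r) with false by (symmetry; apply Nat.eqb_neq; lia).
    apply kappa_pos, halpha; lia.
Qed.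

Lemma prefix_AB_pos : 0 < prefix_A m + prefix_B m.
Proof.
  unfold prefix_A, prefix_B. replace (Nat.leb r m) with true by (symmetry; apply Nat.leb_le; lia).
  assert (0 <= sum_1n kappa_off_r m)
    by (apply sum_1n_nonneg; intros; apply kappa_off_r_nonneg; lia).
  nra.
Qed.

Lemma prefix_ratio :
  prefix_B m / (prefix_A m + prefix_B m) =
  let S := sum_1n (fun i => kappa (alphas i)) m in
  if Req_EM_T (alphas r) 1 then 1 else S / (1 + S).
Proof.
  pose proof prefix_AB_pos as hpos.
  unfold prefix_A, prefix_B in *.
  replace (Nat.leb r m) with true in * by (symmetry; apply Nat.leb_le; lia).
  set (K := sum_1n kappa_off_r m) in *. cbv zeta.
  destruct (Req_EM_T (alphas r) 1) as [e | hne].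
  - rewrite e. field.
  - rewrite (sum_1n_split_at _ r m) by lia.
    replace (Nat.leb r m) with true by (symmetry; apply Nat.leb_le; lia).
    change (sum_1n (fun i => if Nat.eqb i r then 0 else kappa (alphas i)) m) with K.
    unfold kappa.
    assert (h1 : 1 - alphas r <> 0) by lra.
    assert (hden : 1 + (K + alphas r / (1 - alphas r))
                   = (1 - alphas r + (alphas r + (1 - alphas r) * K)) / (1 - alphas r))
      by (field; exact h1).
    rewrite hden. field. split; [exact h1 | lra].
Qed.

End Coefficients.

Theorem mainTheorem10
  (X : Hilbert) (m : nat) (Rs : nat -> X -> X) (r : nat)
  (alphas deltas : nat -> R) :
  (2 <= m)%nat ->
  (1 <= r <= m)%nat ->
  (forall i, (1 <= i <= m)%nat -> i <> r -> 0 < alphas i < 1) ->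
  0 < alphas r ->
  (forall i, (1 <= i <= m)%nat -> deltas i <> 0) ->
  (forall i, (1 <= i <= m)%nat ->
     conically_nonexpansive (alphas i) (fun x => hscal X (/ deltas i) (Rs i x))) ->
  let S' := sum_1n (fun i => if Nat.eqb i r then 0
                             else alphas i / (1 - alphas i)) m in
  let alpha_bar := S' / (1 + S') in
  alphas r * alpha_bar < 1 ->
  let S := sum_1n (fun i => alphas i / (1 - alphas i)) m in
  let alpha := if Req_EM_T (alphas r) 1 then 1 else S / (1 + S) in
  exists N : X -> X, nonexpansive N /\
    forall x, comp_ops Rs m x =
      hscal X (prod_1n deltas m)
        (hadd X (hscal X (1 - alpha) x) (hscal X alpha (N x))).
Proof.
  intros hm hr halpha halpha_r hdelta hconic S' alpha_bar hcond S alpha.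
  assert (hK : alphas r * S' < 1 + S').
  { apply mul_ratio_lt_1; [| exact hcond].
    apply (sum_1n_nonneg (kappa_off_r alphas r)); intros.
    apply (kappa_off_r_nonneg alphas r m); auto. }
  set (Ts := fun i => dilate_conj (prod_1n deltas (pred i))
                        (fun z => hscal X (/ deltas i) (Rs i z))).
  assert (hcomp : conic_ineq (prefix_A alphas r m) (prefix_B alphas r m) (comp_ops Ts m)).
  { apply (conic_ineq_comp_ops X Ts (step_A alphas r) (step_B alphas r)).
    - exact (prefix_A_0 alphas r m hr).
    - exact (prefix_B_0 alphas r m hr).
    - intros k _. apply prefix_succ.
    - exact (step_B_pos alphas r m halpha halpha_r).
    - exact (prefix_B_pos alphas r m hr halpha halpha_r hK).
    - intros i hi. apply conic_ineq_dilate_conj.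
      + apply prod_1n_neq0. intros j hj. apply hdelta. lia.
      + exact (conic_ineq_step alphas r m halpha X _ i hi (hconic i hi)).
    - lia. }
  destruct (conic_ineq_conically_nonexpansive X _ _ _
              (prefix_B_pos alphas r m hr halpha halpha_r hK m ltac:(lia))
              (prefix_AB_pos alphas r m hr halpha hK) hcomp) as [N [HN HT]].
  exists N. split; [exact HN |]. intros x.
  rewrite (comp_ops_rescale X Rs deltas m hdelta x), HT.
  unfold alpha, S. now rewrite (prefix_ratio alphas r m hr halpha hK).
Qed.
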